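(* Let $\mathcal A$ be a small abelian category. The map $$\gamma_{0,\mathcal A}:\mathsf{Cob}_0(\mathcal A)\to K_0(\mathcal A),\qquad [M]\mapsto\sum_{b\in M}s(b)[X_b],$$ is a well-defined isomorphism of abelian groups.
   Context: $K_0(\mathcal A)$ is the abelian group generated by symbols $[X]$ for $X\in\mathrm{Ob}(\mathcal A)$, with relations $[X_2]=[X_1]+[X_3]$ for every short exact sequence $0\to X_1\to X_2\to X_3\to0$. An $\mathcal A$-decorated 0-foam $M$ is a finite set of points $b$, each with a sign $s(b)\in\{\pm1\}$ and an object $X_b\in\mathcal A$; $-M$ reverses all signs. An $\mathcal A$-decorated 1-foam is the realization of a finite oriented graph. Multiple edges, loops and vertexless circles are allowed. Its interior vertices are trivalent and are either ''in'' vertices (two edges in, one out) or ''out'' vertices (one in, two out). At each vertex the two edges of equal orientation type are thin and the third is thick. The foam carries a flat connection with fibers objects of $\mathcal A$: parallel transport along edges gives isomorphisms of fibers, and circles carry monodromy automorphisms. At each vertex the two thin edges are ordered (first, second), and a short exact sequence $0\to X_{\mathrm{first}}\to X_{\mathrm{thick}}\to X_{\mathrm{second}}\to0$ of nearby fibers is fixed. A boundary point has the fiber there and sign $+$ if the edge points toward it, $-$ otherwise. A 1-foam $U$ is a cobordism from $M_0$ to $M_1$ if $\partial U\cong M_1\sqcup(-M_0)$. $\mathsf{Cob}_0(\mathcal A)$ is the set of $\mathcal A$-decorated 0-foams modulo the equivalence relation generated by cobordism. It is an abelian group under disjoint union. *)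

From HB Require Import structures.
From mathcomp Require Import all_boot all_algebra.
From mathcomp Require Import boolp.
From Stdlib Require Import Relations.
Set Implicit Arguments. Unset Strict Implicit. Unset Printing Implicit Defensive.
Import GRing.Theory.
Local Open Scope ring_scope.

Record PreAddCat := {
  Obj : Type;
  Hom : Obj -> Obj -> zmodType;
  comp : forall X Y Z : Obj, Hom Y Z -> Hom X Y -> Hom X Z;
  idm : forall X : Obj, Hom X X;
  compA : forall W X Y Z (f : Hom Y Z) (g : Hom X Y) (h : Hom W X),
      comp f (comp g h) = comp (comp f g) h;
  comp1m : forall X Y (f : Hom X Y), comp (idm Y) f = f;
  compm1 : forall X Y (f : Hom X Y), comp f (idm X) = f;
  compDl : forall X Y Z (f g : Hom Y Z) (h : Hom X Y),
      comp (f + g) h = comp f h + comp g h;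
  compDr : forall X Y Z (f : Hom Y Z) (g h : Hom X Y),
      comp f (g + h) = comp f g + comp f h
}.
Arguments comp {p X Y Z}.
Arguments idm {p}.
Arguments Hom p X Y : clear implicits.

Section Cat.
Variable C : PreAddCat.

Definition is_kernel (X Y K : Obj C) (f : Hom C X Y) (k : Hom C K X) : Prop :=
  comp f k = 0 /\
  forall W (g : Hom C W X), comp f g = 0 -> exists! u : Hom C W K, comp k u = g.

Definition is_cokernel (X Y Q : Obj C) (f : Hom C X Y) (c : Hom C Y Q) : Prop :=
  comp c f = 0 /\
  forall W (g : Hom C Y W), comp g f = 0 -> exists! u : Hom C Q W, comp u c = g.

Definition mono (X Y : Obj C) (f : Hom C X Y) : Prop :=
  forall W (g h : Hom C W X), comp f g = comp f h -> g = h.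

Definition epi (X Y : Obj C) (f : Hom C X Y) : Prop :=
  forall W (g h : Hom C Y W), comp g f = comp h f -> g = h.

Definition isIso (X Y : Obj C) (f : Hom C X Y) : Prop :=
  exists g : Hom C Y X, comp g f = idm X /\ comp f g = idm Y.

Definition isomorphic (X Y : Obj C) : Prop := exists f : Hom C X Y, isIso f.

Definition is_abelian : Prop :=
  (exists Z : Obj C, (forall X (f g : Hom C Z X), f = g) /\
                     (forall X (f g : Hom C X Z), f = g)) /\
  (forall X Y : Obj C, exists P (i1 : Hom C X P) (i2 : Hom C Y P)
        (p1 : Hom C P X) (p2 : Hom C P Y),
      [/\ comp p1 i1 = idm X, comp p2 i2 = idm Y, comp p1 i2 = 0,
          comp p2 i1 = 0 & comp i1 p1 + comp i2 p2 = idm P]) /\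
  (forall X Y (f : Hom C X Y), exists K (k : Hom C K X), is_kernel f k) /\
  (forall X Y (f : Hom C X Y), exists Q (c : Hom C Y Q), is_cokernel f c) /\
  (forall A X (m : Hom C A X), mono m -> exists Y (h : Hom C X Y), is_kernel h m) /\
  (forall X B (e : Hom C X B), epi e -> exists Y (h : Hom C Y X), is_cokernel h e).

Definition SES (X1 X2 X3 : Obj C) (f : Hom C X1 X2) (g : Hom C X2 X3) : Prop :=
  is_kernel g f /\ is_cokernel f g.

(* Elements of the free abelian group on Obj C are represented by formal
   finite sums  sum n_i [X_i]  (lists of (n_i, X_i)); coef gives the
   coefficient function (finitely supported). *)
Definition ind (A X : Obj C) : int := if pselect (A = X) then 1 else 0.
Definition coef (s : seq (int * Obj C)) (X : Obj C) : int :=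
  \sum_(p <- s) p.1 * ind p.2 X.

Record SESdata := { sX1 : Obj C; sX2 : Obj C; sX3 : Obj C;
  sf : Hom C sX1 sX2; sg : Hom C sX2 sX3; sP : SES sf sg }.

Definition relelt (d : SESdata) (X : Obj C) : int :=
  ind (sX2 d) X - ind (sX1 d) X - ind (sX3 d) X.

(* s and t have the same class in K_0: their difference lies in the subgroup
   generated by the relations *)
Definition K0eq (s t : seq (int * Obj C)) : Prop :=
  exists r : seq (int * SESdata),
    forall X, coef s X - coef t X = \sum_(q <- r) q.1 * relelt q.2 X.

Record Foam0 := { pt : finType; sgn : pt -> bool (* true = +1 *); obj : pt -> Obj C }.
Arguments sgn : clear implicits.
Arguments obj : clear implicits.

Definition negF0 (M : Foam0) : Foam0 :=
  {| pt := pt M; sgn := fun b => ~~ sgn M b; obj := obj M |}.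

Definition unionF0 (M N : Foam0) : Foam0 :=
  {| pt := (pt M + pt N)%type;
     sgn := fun b => match b with inl x => sgn M x | inr y => sgn N y end;
     obj := fun b => match b with inl x => obj M x | inr y => obj N y end |}.

Definition iso0 (M N : Foam0) : Prop :=
  exists phi : pt M -> pt N, bijective phi /\
    forall b, sgn N (phi b) = sgn M b /\ isomorphic (obj M b) (obj N (phi b)).

(* edge ends: (e, true) is the head of e, (e, false) its tail *)
Definition vends (E : eqType) (isin : bool) (f s t : E) : seq (E * bool) :=
  if isin then [:: (f, true); (s, true); (t, false)]
  else [:: (t, true); (f, false); (s, false)].

Record Foam1 := {
  fE : finType;   (* edges with endpoints (arcs, loops included) *)
  fV : finType;   (* interior (trivalent) vertices *)
  fCir : finType; (* vertexless circles *)
  efib : fE -> Obj C;  (* fiber along an edge (identified by parallel transport) *)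
  cfib : fCir -> Obj C;
  cmono : forall c, {f : Hom C (cfib c) (cfib c) | isIso f};  (* monodromy *)
  endpt : fE * bool -> option fV;  (* None = boundary point *)
  vin : fV -> bool;                (* true = "in" vertex, false = "out" vertex *)
  vfirst : fV -> fE; vsecond : fV -> fE; vthick : fV -> fE;
  vinc : forall v,
     uniq (vends (vin v) (vfirst v) (vsecond v) (vthick v)) /\
     forall x, (endpt x == Some v) = (x \in vends (vin v) (vfirst v) (vsecond v) (vthick v));
  vses : forall v, {f : Hom C (efib (vfirst v)) (efib (vthick v)) &
                    {g : Hom C (efib (vthick v)) (efib (vsecond v)) | SES f g}}
}.

Definition bdry (U : Foam1) : Foam0 :=
  {| pt := {x : fE U * bool | endpt x == None};
     sgn := fun x => (val x).2;
     obj := fun x => efib (val x).1 |}.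

Definition cobordism (M0 M1 : Foam0) : Prop :=
  exists U : Foam1, iso0 (bdry U) (unionF0 M1 (negF0 M0)).

Definition cob_eq : relation Foam0 := clos_refl_sym_trans Foam0 cobordism.

Definition gamma (M : Foam0) : seq (int * Obj C) :=
  [seq ((if sgn M b then 1 else -1 : int), obj M b) | b <- enum (pt M)].

End Cat.

(* For a 1-foam U, the signed count of the boundary points of U is a sum of
   relations of K_0: each edge contributes its two ends with opposite signs, so
   only the vertices remain, and a vertex contributes +-([X_thick] - [X_first]
   - [X_second]).  Isomorphic decorations differ by the relation of
   0 -> X -> Y -> 0 -> 0, so gamma is constant on cobordism classes.
   Conversely, a single vertex is a cobordism from the empty foam to the three
   signed points of a short exact sequence, so every relation of K_0 can be
   added geometrically; a 0-foam of class zero then splits into pairs of points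
   with equal decoration and opposite signs, and each pair bounds a strand. *)
From Pilot Require Import Defs.
From HB Require Import structures.
From mathcomp Require Import all_boot all_algebra.
From mathcomp Require Import boolp ring zify.
From Stdlib Require Import Relations.
Set Implicit Arguments. Unset Strict Implicit. Unset Printing Implicit Defensive.
Import GRing.Theory.
Local Open Scope ring_scope.

Section Cob0K0.
Variable C : PreAddCat.
Implicit Types M N P Q W : Foam0 C.

(** * The relation subgroup of K_0 *)

Definition rel_span (f : Obj C -> int) : Prop :=
  exists r : seq (int * SESdata C), forall X, f X = \sum_(q <- r) q.1 * relelt q.2 X.

Lemma rel_span0 : rel_span (fun _ => 0).
Proof. by exists [::] => X; rewrite big_nil. Qed.

Lemma eq_rel_span f g : f =1 g -> rel_span f -> rel_span g.
Proof. by move=> fg [r Hr]; exists r => X; rewrite -fg. Qed.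

Lemma rel_spanD f g : rel_span f -> rel_span g -> rel_span (fun X => f X + g X).
Proof. by move=> [r1 H1] [r2 H2]; exists (r1 ++ r2) => X; rewrite big_cat /= H1 H2. Qed.

Lemma rel_spanMl k f : rel_span f -> rel_span (fun X => k * f X).
Proof.
move=> [r H]; exists [seq (k * q.1, q.2) | q <- r] => X.
by rewrite big_map H mulr_sumr; apply: eq_bigr => q _; rewrite mulrA.
Qed.

Lemma rel_spanN f : rel_span f -> rel_span (fun X => - f X).
Proof. by move/(rel_spanMl (-1)); apply: eq_rel_span => X; rewrite mulN1r. Qed.

Lemma rel_spanB f g : rel_span f -> rel_span g -> rel_span (fun X => f X - g X).
Proof. by move=> Hf /rel_spanN; apply: rel_spanD. Qed.

Lemma rel_span_relelt d : rel_span (relelt d).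
Proof. by exists [:: (1, d)] => X; rewrite big_seq1 mul1r. Qed.

Lemma rel_span_sum (I : finType) (F : I -> Obj C -> int) :
  (forall i, rel_span (F i)) -> rel_span (fun X => \sum_i F i X).
Proof.
move=> HF; rewrite /index_enum; elim: (Finite.enum I) => [|i s IH].
  by apply: eq_rel_span rel_span0 => X; rewrite big_nil.
by apply: eq_rel_span (rel_spanD (HF i) IH) => X; rewrite big_cons.
Qed.

Definition is_zero_obj (Z : Obj C) : Prop :=
  (forall X (f g : Defs.Hom C Z X), f = g) /\ (forall X (f g : Defs.Hom C X Z), f = g).

Lemma comp0m (X Y Z : Obj C) (h : Defs.Hom C X Y) : Defs.comp (0 : Defs.Hom C Y Z) h = 0.
Proof. by apply: (@addrI _ (Defs.comp 0 h)); rewrite -Defs.compDl !addr0. Qed.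

Lemma ses_iso_zero (X Y Z : Obj C) (f : Defs.Hom C X Y) (g : Defs.Hom C Y Z) :
  is_zero_obj Z -> isIso f -> SES f g.
Proof.
move=> [Zl Zr] [f' [f'f ff']]; split; split; first exact: Zr.
- move=> W h _; exists (Defs.comp f' h); split.
    by rewrite Defs.compA ff' Defs.comp1m.
  by move=> u <-; rewrite Defs.compA f'f Defs.comp1m.
- exact: Zr.
- move=> W h hf0; exists 0; split; last by move=> u _; apply: Zl.
  by rewrite comp0m -[h]Defs.compm1 -ff' Defs.compA hf0 comp0m.
Qed.

(* [Y] - [X] is the relation of 0 -> X -> Y -> 0 -> 0 minus that of 0 -> 0 -> 0 -> 0 -> 0. *)
Lemma rel_span_isomorphic (Z X Y : Obj C) : is_zero_obj Z -> isomorphic X Y ->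
  rel_span (fun V => ind X V - ind Y V).
Proof.
move=> HZ [f Hf].
have idZ : isIso (idm Z) by exists (idm Z); rewrite Defs.comp1m.
pose dXY := Build_SESdata (ses_iso_zero (0 : Defs.Hom C Y Z) HZ Hf).
pose d0 := Build_SESdata (ses_iso_zero (idm Z) HZ idZ).
apply: eq_rel_span (rel_spanB (rel_span_relelt d0) (rel_span_relelt dXY)) => V.
by rewrite /relelt /=; ring.
Qed.

Definition signz (b : bool) : int := if b then 1 else -1.

Definition gcoef M (X : Obj C) : int :=
  \sum_(b : pt M) signz (sgn b) * ind (obj b) X.

Lemma coef_gamma M X : coef (gamma M) X = gcoef M X.
Proof. by rewrite /coef /gamma big_map big_enum; apply: eq_bigl. Qed.

Lemma K0eq_gcoef M N : K0eq (gamma M) (gamma N) <-> rel_span (fun X => gcoef M X - gcoef N X).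
Proof. by split; apply: eq_rel_span => X; rewrite !coef_gamma. Qed.

Definition emptyF0 : Foam0 C :=
  @Build_Foam0 C void (fun v => match v with end) (fun v => match v with end).

Definition pointF (b : bool) (X : Obj C) : Foam0 C := @Build_Foam0 C unit (fun _ => b) (fun _ => X).

Fixpoint repF (n : nat) M : Foam0 C :=
  if n is n'.+1 then unionF0 M (repF n' M) else emptyF0.

Lemma gcoef_empty X : gcoef emptyF0 X = 0.
Proof. by rewrite /gcoef big1 // => -[]. Qed.

Lemma gcoef_union M N X : gcoef (unionF0 M N) X = gcoef M X + gcoef N X.
Proof. by rewrite /gcoef big_sumType. Qed.

Lemma gcoef_neg M X : gcoef (negF0 M) X = - gcoef M X.
Proof.
rewrite /gcoef -sumrN; apply: eq_bigr => b _ /=.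
by case: (@sgn C M b); rewrite /signz /= ?mulN1r ?mul1r ?opprK.
Qed.

Lemma gcoef_point b X Y : gcoef (pointF b X) Y = signz b * ind X Y.
Proof. by rewrite /gcoef (big_pred1 tt). Qed.

Lemma gcoef_rep n M X : gcoef (repF n M) X = gcoef M X *+ n.
Proof. by elim: n => [|n IH] /=; rewrite ?gcoef_empty // gcoef_union IH mulrS. Qed.

(* An integer multiple k F is realised by |k| copies of F or of -F. *)
Lemma signz_normz (k x : int) : (signz (0 <= k) * x) *+ `|k|%N = k * x.
Proof.
case: k => n /=; first by rewrite mul1r -mulr_natl natz.
by rewrite NegzE mulN1r -mulr_natl natz mulrN mulNr.
Qed.

Definition sumF (s : seq (int * Obj C)) : Foam0 C :=
  foldr (fun p F => unionF0 (repF `|p.1|%N (pointF (0 <= p.1) p.2)) F) emptyF0 s.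

Lemma gcoef_sumF s X : gcoef (sumF s) X = coef s X.
Proof.
elim: s => [|p s IH] /=; first by rewrite gcoef_empty /coef big_nil.
by rewrite /coef big_cons -/(coef s X) gcoef_union IH gcoef_rep gcoef_point signz_normz.
Qed.

Lemma isomorphic_refl (X : Obj C) : isomorphic X X.
Proof. by exists (idm X), (idm X); rewrite Defs.comp1m. Qed.

Lemma isomorphic_sym (X Y : Obj C) : isomorphic X Y -> isomorphic Y X.
Proof. by move=> [f [g [gf fg]]]; exists g, f. Qed.

Lemma isomorphic_trans (X Y Z : Obj C) : isomorphic X Y -> isomorphic Y Z -> isomorphic X Z.
Proof.
move=> [f [f' [f'f ff']]] [g [g' [g'g gg']]].
exists (Defs.comp g f), (Defs.comp f' g'); split.
- by rewrite Defs.compA -(Defs.compA f' g' g) g'g Defs.compm1.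
- by rewrite Defs.compA -(Defs.compA g f f') ff' Defs.compm1.
Qed.

Section Relabel.
Variables (M N : Foam0 C) (phi : pt M -> pt N) (psi : pt N -> pt M).
Hypotheses (phiK : cancel phi psi) (psiK : cancel psi phi).
Hypotheses (sgn_phi : forall b, sgn (phi b) = sgn b) (obj_phi : forall b, obj (phi b) = obj b).

Lemma iso0_relabel : iso0 M N.
Proof.
exists phi; split; first by exists psi.
by move=> b; rewrite obj_phi; split => //; apply: isomorphic_refl.
Qed.

Lemma gcoef_relabel X : gcoef N X = gcoef M X.
Proof.
rewrite /gcoef (reindex phi); last by apply: onW_bij; exists psi.
by apply: eq_bigr => b _; rewrite sgn_phi obj_phi.
Qed.

End Relabel.

Lemma iso0_refl M : iso0 M M.
Proof. exact: (@iso0_relabel _ _ id id). Qed.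

Lemma iso0_sym M N : iso0 M N -> iso0 N M.
Proof.
move=> [phi [[psi phiK psiK] H]]; exists psi; split; first by exists phi.
move=> b; have [Hs Ho] := H (psi b); rewrite psiK in Hs Ho.
by split => //; apply: isomorphic_sym.
Qed.

Lemma iso0_trans M N P : iso0 M N -> iso0 N P -> iso0 M P.
Proof.
move=> [phi [Bphi H]] [chi [Bchi G]]; exists (chi \o phi); split; first exact: bij_comp.
move=> b; have [Hs Ho] := H b; have [Gs Go] := G (phi b).
by split; [rewrite /= Gs | apply: isomorphic_trans Go].
Qed.

Lemma iso0_union M M' N N' : iso0 M M' -> iso0 N N' -> iso0 (unionF0 M N) (unionF0 M' N').
Proof.
move=> [phi [[phi' phiK phiK'] H]] [chi [[chi' chiK chiK'] G]].
exists (fun x => match x with inl a => inl (phi a) | inr b => inr (chi b) end); split.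
  exists (fun x => match x with inl a => inl (phi' a) | inr b => inr (chi' b) end).
    by case=> a /=; rewrite ?phiK ?chiK.
  by case=> a /=; rewrite ?phiK' ?chiK'.
by case=> a /=; [apply: H | apply: G].
Qed.

Lemma iso0_neg M N : iso0 M N -> iso0 (negF0 M) (negF0 N).
Proof. by move=> [phi [Bphi H]]; exists phi; split => // b; have [/= -> ?] := H b. Qed.

Lemma iso0_unionC M N : iso0 (unionF0 M N) (unionF0 N M).
Proof.
by apply: (@iso0_relabel (unionF0 M N) (unionF0 N M)
  (fun x => match x with inl a => inr a | inr b => inl b end)
  (fun x => match x with inl a => inr a | inr b => inl b end)); case.
Qed.

Lemma iso0_unionA M N P : iso0 (unionF0 (unionF0 M N) P) (unionF0 M (unionF0 N P)).
Proof.
apply: (@iso0_relabel (unionF0 (unionF0 M N) P) (unionF0 M (unionF0 N P))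
  (fun x => match x with inl (inl a) => inl a | inl (inr b) => inr (inl b)
                       | inr c => inr (inr c) end)
  (fun x => match x with inl a => inl (inl a) | inr (inl b) => inl (inr b)
                       | inr (inr c) => inr c end)); by do ![case].
Qed.

Lemma iso0_unionACA M N P Q :
  iso0 (unionF0 (unionF0 M N) (unionF0 P Q)) (unionF0 (unionF0 M P) (unionF0 N Q)).
Proof.
apply: (@iso0_relabel (unionF0 (unionF0 M N) (unionF0 P Q)) (unionF0 (unionF0 M P) (unionF0 N Q))
  (fun x => match x with inl (inl a) => inl (inl a) | inl (inr b) => inr (inl b)
                       | inr (inl d) => inl (inr d) | inr (inr e) => inr (inr e) end)
  (fun x => match x with inl (inl a) => inl (inl a) | inr (inl b) => inl (inr b)
                       | inl (inr d) => inr (inl d) | inr (inr e) => inr (inr e) end));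
  by do 2![case].
Qed.

Lemma iso0_union0l M : iso0 (unionF0 emptyF0 M) M.
Proof.
apply: (@iso0_relabel (unionF0 emptyF0 M) M
  (fun x => match x with inl a => match a with end | inr b => b end) inr) => //; by case=> [[]|].
Qed.

Lemma iso0_union_neg0 M : iso0 M (unionF0 M (negF0 emptyF0)).
Proof.
apply: (@iso0_relabel M (unionF0 M (negF0 emptyF0)) inl
  (fun x => match x with inl a => a | inr v => match v with end end)) => //; by case=> [|[]].
Qed.

Lemma iso0_negU M N : iso0 (unionF0 (negF0 M) (negF0 N)) (negF0 (unionF0 M N)).
Proof.
by apply: (@iso0_relabel (unionF0 (negF0 M) (negF0 N)) (negF0 (unionF0 M N)) id id); case.
Qed.

Lemma rel_span_iso0 Z M N : is_zero_obj Z -> iso0 M N ->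
  rel_span (fun X => gcoef M X - gcoef N X).
Proof.
move=> HZ [phi [Bphi H]].
have gcoefN X : gcoef N X = \sum_(b : pt M) signz (sgn b) * ind (obj (phi b)) X.
  rewrite /gcoef (reindex phi); last exact: onW_bij.
  by apply: eq_bigr => b _; rewrite (proj1 (H b)).
apply: eq_rel_span (_ : rel_span (fun X => \sum_(b : pt M)
         signz (sgn b) * (ind (obj b) X - ind (obj (phi b)) X))).
  by move=> X; rewrite gcoefN /gcoef -sumrB; apply: eq_bigr => b _; rewrite mulrBr.
apply: rel_span_sum => b; apply: rel_spanMl.
exact: rel_span_isomorphic HZ (proj2 (H b)).
Qed.

(** * The boundary of a 1-foam is a sum of relations *)

Section Boundary.
Variable U : Foam1 C.

Definition vertex_ses (v : fV U) : SESdata C := Build_SESdata (proj2_sig (projT2 (vses v))).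

Let endF X (x : fE U * bool) : int := signz x.2 * ind (efib x.1) X.

Let vertex_ends (v : fV U) := vends (vin v) (vfirst v) (vsecond v) (vthick v).

Lemma gcoef_bdry X : gcoef (bdry U) X = \sum_(x | endpt x == None) endF X x.
Proof.
rewrite [RHS](@reindex_omap _ _ _ _ (pt (bdry U)) val insub); last by move=> x Hx; rewrite insubT.
by apply: eq_big => // y; rewrite (valP y) valK eqxx.
Qed.

(* The two ends of every edge cancel. *)
Lemma sum_edge_ends X : \sum_x endF X x = 0.
Proof.
rewrite -(pair_big xpredT xpredT (fun e b => endF X (e, b))) /=.
by rewrite big1 // => e _; rewrite big_bool /endF /signz /=; ring.
Qed.

Lemma sum_vertex_ends X v :
  \sum_(x <- vertex_ends v) endF X x = - (signz (vin v) * relelt (vertex_ses v) X).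
Proof.
rewrite /vertex_ends /vends /relelt /=.
by case: (vin v); rewrite !big_cons big_nil /endF /signz /=; ring.
Qed.

(* Every edge end is either a boundary point or incident to exactly one vertex. *)
Lemma sum_ends_split X :
  \sum_x endF X x = \sum_(x | endpt x == None) endF X x + \sum_v \sum_(x <- vertex_ends v) endF X x.
Proof.
have -> : \sum_x endF X x = \sum_x ((if endpt x == None then endF X x else 0) +
                             \sum_v (if endpt x == Some v then endF X x else 0)).
  apply: eq_bigr => x _; case: (endpt x) => [w|] /=; last by rewrite big1 ?addr0.
  rewrite (bigD1 w) //= eqxx big1 ?add0r ?addr0 // => v /negbTE vw.
  by case: eqP => // -[wv]; rewrite wv eqxx in vw.
rewrite big_split /= -big_mkcond exchange_big /=; congr (_ + _).
apply: eq_bigr => v _; rewrite -big_mkcond; have [vuniq vendsE] := vinc v.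
by rewrite (big_uniq _ vuniq); apply: eq_bigl => x; rewrite vendsE.
Qed.

Lemma rel_span_bdry : rel_span (gcoef (bdry U)).
Proof.
apply: (@eq_rel_span (fun X => \sum_v signz (vin v) * relelt (vertex_ses v) X)).
  move=> X; have := sum_ends_split X.
  rewrite sum_edge_ends (eq_bigr _ (fun v _ => sum_vertex_ends X v)) sumrN => split0.
  by apply/eqP; rewrite gcoef_bdry eq_sym -subr_eq0 -split0.
by apply: rel_span_sum => v; apply/rel_spanMl/rel_span_relelt.
Qed.

End Boundary.

Lemma rel_span_cobordism Z M N : is_zero_obj Z -> cobordism M N ->
  rel_span (fun X => gcoef M X - gcoef N X).
Proof.
move=> HZ [U HU].
apply: eq_rel_span (rel_spanB (rel_span_iso0 HZ HU) (rel_span_bdry U)) => X /=.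
by rewrite !gcoef_union gcoef_neg; ring.
Qed.

(** * Elementary cobordisms *)

Definition emptyF1 : Foam1 C :=
  @Build_Foam1 C void void void (fun v => match v with end) (fun v => match v with end)
    (fun v => match v with end) (fun _ => None) (fun v => match v with end)
    (fun v => match v with end) (fun v => match v with end) (fun v => match v with end)
    (fun v => match v with end) (fun v => match v with end).

Lemma cobordism_empty : cobordism emptyF0 emptyF0.
Proof.
exists emptyF1.
apply: (@iso0_relabel (bdry emptyF1) (unionF0 emptyF0 (negF0 emptyF0))
          (fun x => match (val x).1 with end)
          (fun y => match y with inl v => match v with end | inr v => match v with end end));
  by do ![case].
Qed.

(* U together with the product foam W x [0,1]: each point of W becomes an edge. *)
Section Strands.
Variables (U : Foam1 C) (W : Foam0 C).

Definition strand_efib (e : fE U + pt W) : Obj C :=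
  match e with inl e => efib e | inr w => obj w end.

Definition strand_endpt (x : (fE U + pt W) * bool) : option (fV U) :=
  if x.1 is inl e then endpt (e, x.2) else None.

Lemma strand_vinc v :
  uniq (vends (vin v) (inl (vfirst v) : fE U + pt W) (inl (vsecond v)) (inl (vthick v))) /\
  forall x, (strand_endpt x == Some v) =
    (x \in vends (vin v) (inl (vfirst v) : fE U + pt W) (inl (vsecond v)) (inl (vthick v))).
Proof.
pose lift (p : fE U * bool) : (fE U + pt W) * bool := (inl p.1, p.2).
have lift_inj : injective lift by move=> [a b] [a' b'] [-> ->].
have [vuniq vendsE] := vinc v.
have -> : vends (vin v) (inl (vfirst v)) (inl (vsecond v)) (inl (vthick v))
        = map lift (vends (vin v) (vfirst v) (vsecond v) (vthick v)).
  by rewrite /vends; case: (vin v).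
split; first by rewrite (map_inj_uniq lift_inj).
case=> [[e|w] b]; first by rewrite -[(inl e, b)]/(lift (e, b)) (mem_map lift_inj) -vendsE.
by apply/esym/mapP => -[[e b'] _].
Qed.

Definition strandsF : Foam1 C :=
  @Build_Foam1 C (fE U + pt W)%type (fV U) (fCir U) strand_efib (@cfib C U) (@cmono C U)
    strand_endpt (@vin C U) (fun v => inl (vfirst v)) (fun v => inl (vsecond v))
    (fun v => inl (vthick v)) strand_vinc (@vses C U).

Definition strands_bdry_to (x : pt (bdry strandsF)) : pt (unionF0 (bdry U) (unionF0 W (negF0 W))) :=
  match x with
  | exist (inl e, b) p => inl (exist (fun y : fE U * bool => endpt y == None) (e, b) p)
  | exist (inr w, b) _ => inr (if b == @sgn C W w then inl w else inr w)
  end.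

Definition strands_bdry_from (y : pt (unionF0 (bdry U) (unionF0 W (negF0 W)))) :
    pt (bdry strandsF) :=
  match y with
  | inl (exist (e, b) p) => exist (fun x => strand_endpt x == None) (inl e, b) p
  | inr (inl w) => exist (fun x => strand_endpt x == None) (inr w, @sgn C W w) (eqxx None)
  | inr (inr w) => exist (fun x => strand_endpt x == None) (inr w, ~~ @sgn C W w) (eqxx None)
  end.

Lemma bdry_strandsF : iso0 (bdry strandsF) (unionF0 (bdry U) (unionF0 W (negF0 W))).
Proof.
apply: (@iso0_relabel _ _ strands_bdry_to strands_bdry_from).
- case=> [[[e|w] b] p] //=; case: ifP => [/eqP Eb|/negbT H]; apply: val_inj => /=.
    by rewrite Eb.
  by move: H; case: b {p}; case: (@sgn C W w).
- by case=> [[[e b] p]|[w|w]] //=; rewrite ?eqxx //; case: (@sgn C W w).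
- case=> [[[e|w] b] p] //=; case: ifP => [/eqP ->|/negbT] //=.
  by case: b {p}; case: (@sgn C W w).
- by case=> [[[e|w] b] p] //=; case: ifP.
Qed.

End Strands.

Lemma cobordism_unionr M0 M1 W : cobordism M0 M1 -> cobordism (unionF0 M0 W) (unionF0 M1 W).
Proof.
move=> [U HU]; exists (strandsF U W).
apply: iso0_trans (bdry_strandsF U W) _.
apply: iso0_trans (iso0_union HU (iso0_refl _)) _.
apply: iso0_trans (iso0_unionACA _ _ _ _) _.
exact: iso0_union (iso0_refl _) (iso0_negU _ _).
Qed.

Lemma cobordism_iso0 (A0 A1 B0 B1 : Foam0 C) : cobordism A0 A1 ->
  iso0 (unionF0 A1 (negF0 A0)) (unionF0 B1 (negF0 B0)) -> cobordism B0 B1.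
Proof. by move=> [U HU] H; exists U; apply: iso0_trans H. Qed.

(* A single "in" vertex carrying d, with Some true, Some false and None as its
   first, second and thick edge. *)
Section Vertex.
Variable d : SESdata C.

Definition ses_efib (e : option bool) : Obj C :=
  match e with Some true => sX1 d | Some false => sX3 d | None => sX2 d end.

Definition ses_endpt (x : option bool * bool) : option unit :=
  match x with (Some _, true) | (None, false) => Some tt | _ => None end.

Lemma ses_vinc (v : unit) :
  uniq (vends true (Some true) (Some false) None) /\
  forall x, (ses_endpt x == Some v) = (x \in vends true (Some true) (Some false) None).
Proof. by case: v; split => // -[[[]|] []]. Qed.

Definition vertexF : Foam1 C :=
  @Build_Foam1 C (option bool) unit void ses_efib (fun v => match v with end)
    (fun v => match v with end) ses_endpt (fun _ => true) (fun _ => Some true)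
    (fun _ => Some false) (fun _ => None) ses_vinc
    (fun _ => existT _ (sf d) (exist _ (sg d) (sP d))).

Definition sesF : Foam0 C :=
  @Build_Foam0 C (option bool) (fun e => if e is None then true else false) ses_efib.

Lemma gcoef_ses X : gcoef sesF X = relelt d X.
Proof.
rewrite /gcoef (bigD1 None) // (bigD1 (Some true)) // (bigD1 (Some false)) //=.
by rewrite big1 ?addr0; [rewrite /relelt /signz /=; ring | case=> [[]|]].
Qed.

Definition vertex_bdry_from (y : pt (unionF0 sesF (negF0 emptyF0))) : pt (bdry vertexF) :=
  match y with
  | inl (Some b) => exist (fun x => ses_endpt x == None) (Some b, false) (eqxx None)
  | inl None => exist (fun x => ses_endpt x == None) (None, true) (eqxx None)
  | inr v => match v with end
  end.

Lemma cobordism_ses : cobordism emptyF0 sesF.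
Proof.
exists vertexF.
apply: (@iso0_relabel (bdry vertexF) (unionF0 sesF (negF0 emptyF0))
  (fun x => inl (val x).1) vertex_bdry_from).
- by case=> [[[[]|] []] p] //; apply: val_inj.
- by case=> [[[]|]|[]].
- by case=> [[[[]|] []] p].
- by case=> [[[[]|] []] p].
Qed.

End Vertex.

Lemma cob_eq_sym M N : cob_eq M N -> cob_eq N M.
Proof. exact: rst_sym. Qed.

Lemma cob_eq_trans M N P : cob_eq M N -> cob_eq N P -> cob_eq M P.
Proof. exact: rst_trans. Qed.

Lemma cob_eq_iso0 M N : iso0 M N -> cob_eq M N.
Proof.
move=> H; apply: rst_step.
apply: cobordism_iso0 (cobordism_unionr M cobordism_empty) _.
exact: iso0_union (iso0_trans (iso0_union0l M) H) (iso0_neg (iso0_union0l M)).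
Qed.

Lemma cob_eq_unionr M N W : cob_eq M N -> cob_eq (unionF0 M W) (unionF0 N W).
Proof.
elim=> [A B H|A|A B _ IH|A B D _ IH1 _ IH2].
- exact/rst_step/cobordism_unionr.
- exact: rst_refl.
- exact: rst_sym.
- exact: rst_trans IH1 IH2.
Qed.

Lemma cob_eq_union0l P W : cob_eq P emptyF0 -> cob_eq (unionF0 P W) W.
Proof. by move=> H; apply: cob_eq_trans (cob_eq_unionr W H) (cob_eq_iso0 (iso0_union0l W)). Qed.

Lemma cob_eq_union0r P W : cob_eq P emptyF0 -> cob_eq (unionF0 W P) W.
Proof. by move=> H; apply: cob_eq_trans (cob_eq_iso0 (iso0_unionC _ _)) (cob_eq_union0l W H). Qed.

Lemma cob_eq_unionN M : cob_eq (unionF0 M (negF0 M)) emptyF0.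
Proof.
apply/cob_eq_sym/rst_step.
apply: cobordism_iso0 (cobordism_unionr M cobordism_empty) _.
apply: iso0_trans (iso0_union_neg0 _).
exact: iso0_union (iso0_union0l M) (iso0_neg (iso0_union0l M)).
Qed.

Lemma cob_eq_subr M Q : cob_eq (unionF0 M (negF0 Q)) emptyF0 -> cob_eq M Q.
Proof.
move=> H; apply: cob_eq_trans (cob_eq_sym (cob_eq_union0r M (cob_eq_unionN Q))) _.
apply: cob_eq_trans (cob_eq_iso0 (iso0_union (iso0_refl M) (iso0_unionC _ _))) _.
apply: cob_eq_trans (cob_eq_iso0 (iso0_sym (iso0_unionA _ _ _))) _.
exact: cob_eq_union0l H.
Qed.

Lemma cob_eq_rep n M : cob_eq M emptyF0 -> cob_eq (repF n M) emptyF0.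
Proof.
move=> H; elim: n => [|n IH] /=; first exact: rst_refl.
exact: cob_eq_trans (cob_eq_union0l _ H) IH.
Qed.

Definition relF (r : seq (int * SESdata C)) : Foam0 C :=
  foldr (fun q F => unionF0 (repF `|q.1|%N (if 0 <= q.1 then sesF q.2 else negF0 (sesF q.2))) F)
    emptyF0 r.

Lemma gcoef_relF r X : gcoef (relF r) X = \sum_(q <- r) q.1 * relelt q.2 X.
Proof.
elim: r => [|q r IH] /=; first by rewrite gcoef_empty big_nil.
rewrite big_cons gcoef_union IH gcoef_rep -signz_normz; congr (_ *+ _ + _).
by case: ifP => _; rewrite ?gcoef_neg gcoef_ses /signz ?mul1r ?mulN1r.
Qed.

Lemma cob_eq_relF r : cob_eq (relF r) emptyF0.
Proof.
have sesF0 d : cob_eq (sesF d) emptyF0 by apply/cob_eq_sym/rst_step/cobordism_ses.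
elim: r => [|q r IH] /=; first exact: rst_refl.
apply: cob_eq_trans (cob_eq_union0l _ _) IH; apply: cob_eq_rep; case: ifP => _ //.
apply: cob_eq_trans (cob_eq_iso0 (iso0_sym (iso0_union0l _))) _.
exact: cob_eq_trans (cob_eq_unionr _ (cob_eq_sym (sesF0 q.2))) (cob_eq_unionN _).
Qed.

(** * 0-foams with zero signed count are null-cobordant *)

Lemma ind_ge0 (A X : Obj C) : 0 <= ind A X.
Proof. by rewrite /ind; case: pselect. Qed.

Lemma ind_id (A : Obj C) : ind A A = 1.
Proof. by rewrite /ind; case: pselect. Qed.

Lemma ind_neq (A X : Obj C) : A <> X -> ind A X = 0.
Proof. by rewrite /ind; case: pselect. Qed.

(* If b had no partner, all points decorated by obj b would share its sign and
   the count at obj b would be nonzero. *)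
Lemma gcoef0_partner P (b : pt P) : (forall X, gcoef P X = 0) ->
  exists b' : pt P, obj b' = obj b /\ sgn b' = ~~ sgn b.
Proof.
move=> P0; apply: contrapT => nopartner.
have same_sign (b' : pt P) : signz (sgn b) * (signz (sgn b') * ind (obj b') (obj b))
                    = ind (obj b') (obj b).
  have [Ob'|Ob'] := pselect (obj b' = obj b); last by rewrite ind_neq // !mulr0.
  have -> : sgn b' = sgn b.
    apply: contrapT => Sb'; apply: nopartner; exists b'.
    by split; last by move: Sb'; case: sgn; case: sgn.
  by rewrite Ob' ind_id; case: sgn.
have := P0 (obj b); move/(congr1 (fun t => signz (sgn b) * t)).
rewrite mulr0 /gcoef mulr_sumr (eq_bigr _ (fun b' _ => same_sign b')) (bigD1 b) //= ind_id.
have : 0 <= \sum_(i | i != b) ind (obj i) (obj b).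
  by apply: Num.Theory.sumr_ge0 => i _; apply: ind_ge0.
by move: (\sum_(i | i != b) _) => t; lia.
Qed.

Definition subF P (A : pred (pt P)) : Foam0 C :=
  @Build_Foam0 C {: {x : pt P | A x}} (fun x => sgn (val x)) (fun x => obj (val x)).

Section RemovePair.
Variables (P : Foam0 C) (b b' : pt P).
Hypotheses (obj_b' : obj b' = obj b) (sgn_b' : sgn b' = ~~ sgn b).

Let neq_b' : b' != b.
Proof. by apply/eqP => E; move: sgn_b'; rewrite E; case: sgn. Qed.

Let rest := subF (fun x => (x != b) && (x != b')).
Let pair := pointF (sgn b) (obj b).

Let to_P (x : pt (unionF0 rest (unionF0 pair (negF0 pair)))) : pt P :=
  match x with inl y => val y | inr (inl _) => b | inr (inr _) => b' end.

Let from_P (x : pt P) : pt (unionF0 rest (unionF0 pair (negF0 pair))) :=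
  match insub x with
  | Some y => inl y
  | None => if x == b then inr (inl tt) else inr (inr tt)
  end.

Let to_PK : cancel to_P from_P.
Proof.
case=> [y|[[]|[]]]; rewrite /from_P /=; first by rewrite valK.
  by rewrite insubF ?eqxx.
by rewrite insubF ?(negbTE neq_b') // eqxx andbF.
Qed.

Let from_PK : cancel from_P to_P.
Proof.
move=> x; rewrite /from_P; case: insubP => [y _ <-|] //=.
rewrite negb_and !negbK => /orP[] /eqP ->; first by rewrite eqxx.
by rewrite (negbTE neq_b').
Qed.

Let sgn_to_P x : sgn (to_P x) = sgn x. Proof. by case: x => [y|[[]|[]]]. Qed.
Let obj_to_P x : obj (to_P x) = obj x. Proof. by case: x => [y|[[]|[]]]. Qed.

Lemma iso0_remove_pair : iso0 (unionF0 rest (unionF0 pair (negF0 pair))) P.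
Proof. exact: iso0_relabel to_PK from_PK sgn_to_P obj_to_P. Qed.

Lemma gcoef_remove_pair X : gcoef rest X = gcoef P X.
Proof.
by rewrite (gcoef_relabel to_PK from_PK sgn_to_P obj_to_P) !gcoef_union gcoef_neg subrr addr0.
Qed.

Lemma card_remove_pair : (#|pt rest| < #|pt P|)%N.
Proof.
rewrite /= card_sig; apply: (@leq_ltn_trans #|predC1 b|).
  by apply: subset_leq_card; apply/subsetP => x; rewrite !inE => /andP[].
by rewrite cardC1 ltn_predL; apply/card_gt0P; exists b.
Qed.

End RemovePair.

Lemma cob_eq_card0 P : #|pt P| = 0%N -> cob_eq P emptyF0.
Proof.
move/card0_eq => P0; apply: cob_eq_iso0.
have none (x : pt P) : False by have := P0 x; rewrite inE.
by apply: (@iso0_relabel P emptyF0 (fun x => match none x with end) (fun v => match v with end));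
  do ?[case | move=> x; case: (none x)].
Qed.

Lemma cob_eq_gcoef0 P : (forall X, gcoef P X = 0) -> cob_eq P emptyF0.
Proof.
move: {2}#|pt P| (leqnn #|pt P|) => n; elim: n P => [|n IH] P.
  by rewrite leqn0 => /eqP P0 _; apply: cob_eq_card0.
case: (pickP (@predT (pt P))) => [b _ | P0] card_P gcoef_P; last first.
  by apply: cob_eq_card0; apply: eq_card0.
have [b' [Ob' Sb']] := gcoef0_partner b gcoef_P.
apply: cob_eq_trans (cob_eq_iso0 (iso0_sym (iso0_remove_pair Ob' Sb'))) _.
apply: cob_eq_trans (cob_eq_union0r _ (cob_eq_unionN _)) _.
apply: IH; first by rewrite -ltnS (leq_trans (card_remove_pair b b')).
by move=> X; rewrite gcoef_remove_pair.
Qed.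

Lemma coef_cat (s t : seq (int * Obj C)) X : coef (s ++ t) X = coef s X + coef t X.
Proof. exact: big_cat. Qed.

Lemma K0eq_gamma_cob_eq Z M N : is_zero_obj Z -> cob_eq M N -> K0eq (gamma M) (gamma N).
Proof.
move=> HZ MN; apply/K0eq_gcoef; elim: MN => [A B AB|A|A B _ IH|A B D _ IH1 _ IH2].
- exact: rel_span_cobordism HZ AB.
- by apply: eq_rel_span rel_span0 => X; rewrite subrr.
- by apply: eq_rel_span (rel_spanN IH) => X; rewrite opprB.
- by apply: eq_rel_span (rel_spanD IH1 IH2) => X; rewrite addrA subrK.
Qed.

Lemma K0eq_gamma_union M N : K0eq (gamma (unionF0 M N)) (gamma M ++ gamma N).
Proof. by exists [::] => X; rewrite big_nil coef_cat !coef_gamma gcoef_union subrr. Qed.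

(* The relations witnessing [M] = [N] in K_0 are realised by vertex boundaries relF r. *)
Lemma cob_eq_K0eq_gamma M N : K0eq (gamma M) (gamma N) -> cob_eq M N.
Proof.
move=> /K0eq_gcoef [r Hr].
have: cob_eq M (unionF0 N (relF r)).
  apply/cob_eq_subr/cob_eq_gcoef0 => X.
  by rewrite gcoef_union gcoef_neg gcoef_union gcoef_relF -Hr; ring.
by move/cob_eq_trans; apply; apply: cob_eq_union0r (cob_eq_relF r).
Qed.

Lemma K0eq_gamma_sumF s : K0eq (gamma (sumF s)) s.
Proof. by exists [::] => X; rewrite big_nil coef_gamma gcoef_sumF subrr. Qed.

End Cob0K0.

Theorem mainTheorem3 (C : PreAddCat) (HC : is_abelian C) :
  (* well-defined on Cob_0 *)
  (forall M N : Foam0 C, cob_eq M N -> K0eq (gamma M) (gamma N)) /\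
  (* additive: disjoint union goes to sum *)
  (forall M N : Foam0 C, K0eq (gamma (unionF0 M N)) (gamma M ++ gamma N)) /\
  (* injective on Cob_0 *)
  (forall M N : Foam0 C, K0eq (gamma M) (gamma N) -> cob_eq M N) /\
  (* surjective onto K_0 *)
  (forall s : seq (int * Obj C), exists M : Foam0 C, K0eq (gamma M) s).
Proof.
have [Z HZ] : exists Z : Obj C, is_zero_obj Z by case: HC => -[Z HZ] _; exists Z.
split; first by move=> M N; apply: K0eq_gamma_cob_eq HZ.
split; first exact: K0eq_gamma_union.
split; first exact: cob_eq_K0eq_gamma.
by move=> s; exists (sumF s); apply: K0eq_gamma_sumF.
Qed.
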